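(* Let $k$ be a field of characteristic $p>0$, let $R$ be a smooth $k$-algebra, let $e\in\mathbb N_{>0}$ and $m\in\mathbb N_{>0}$, and let $\mathbb D=(D_{\mathbf i})_{\mathbf i\in[p^m]^e}$ be an $m$-truncated $e$-dimensional HS-derivation on $R$ over $k$. Then there exists an $e$-dimensional HS-derivation $\mathbb D'=(D'_{\mathbf i})_{\mathbf i\in\mathbb N^e}$ on $R$ over $k$ such that $D'_{\mathbf i}=D_{\mathbf i}$ for every $\mathbf i\in[p^m]^e$.
   Context: All rings are commutative with $1$. For $m\in\mathbb N_{>0}\cup\{\infty\}$ and a $k$-algebra $R$ put $R[\bar v]:=R[X_1,\dots,X_e]/(X_1^{p^m},\dots,X_e^{p^m})$, with $v_i$ the image of $X_i$ (for $m=\infty$, $R[\bar v]:=R[[X_1,\dots,X_e]]$ and $v_i=X_i$). Let $[p^m]=\{0,1,\dots,p^m-1\}$ (and $[p^\infty]=\mathbb N$); for $\mathbf i=(i_1,\dots,i_e)$ write $\bar v^{\mathbf i}=v_1^{i_1}\cdots v_e^{i_e}$. An $m$-truncated $e$-dimensional HS-derivation on $R$ over $k$ is a family $\mathbb D=(D_{\mathbf i}:R\to R)_{\mathbf i\in[p^m]^e}$ such that the map $R\to R[\bar v]$, $r\mapsto\sum_{\mathbf i}D_{\mathbf i}(r)\bar v^{\mathbf i}$, is a $k$-algebra homomorphism and $D_{\mathbf 0}=\mathrm{id}_R$. For $m=\infty$ this is called an $e$-dimensional HS-derivation. *)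

From HB Require Import structures.
From mathcomp Require Import all_boot all_order all_algebra.
Set Implicit Arguments. Unset Strict Implicit. Unset Printing Implicit Defensive.
Import Order.TTheory GRing.Theory Num.Theory.
Local Open Scope ring_scope.

Definition mindex (e : nat) := {ffun 'I_e -> nat}.

Definition mzero (e : nat) : mindex e := [ffun => 0%N].

Definition in_box (e N : nat) (i : mindex e) : bool := [forall t, (i t < N)%N].

Definition mle (e : nat) (j i : mindex e) : bool := [forall t, (j t <= i t)%N].
Definition msub (e : nat) (i j : mindex e) : mindex e := [ffun t => (i t - j t)%N].

Definition mbound (e : nat) (i : mindex e) : nat := (\max_(t < e) i t).+1.

Definition mval (e n : nat) (j : {ffun 'I_e -> 'I_n}) : mindex e := [ffun t => val (j t)].

(* The coefficient of v^i in (sum_j D_j(r) v^j)(sum_l D_l(s) v^l), i.e.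
   sum over j + l = i of D_j(r) D_l(s) (j ranges over j <= i componentwise). *)
Definition leib_coef (k : fieldType) (R : comAlgType k) (e : nat)
    (D : mindex e -> R -> R) (i : mindex e) (r s : R) : R :=
  \sum_(j : {ffun 'I_e -> 'I_(mbound i)} | mle (mval j) i)
     D (mval j) r * D (msub i (mval j)) s.

(* The family (D_i)_{i in P} defines a k-algebra homomorphism
   R -> R[bar v], r |-> sum_i D_i(r) v^i, with D_0 = id, written out
   coefficientwise: k-linearity, preservation of 1, preservation of products
   (coefficient of v^i of a product), and D_0 = id.
   For P = [p^m]^e the target is R[X]/(X_1^{p^m},...,X_e^{p^m});
   for P = N^e the target is R[[X_1,...,X_e]]. *)
Definition HS_family (k : fieldType) (R : comAlgType k) (e : nat)
    (P : pred (mindex e)) (D : mindex e -> R -> R) : Prop :=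
  [/\ forall i, P i -> forall (a : k) (r s : R), D i (a *: r + s) = a *: D i r + D i s,
      forall i, P i -> D i 1 = (i == mzero e)%:R,
      forall i, P i -> forall r s : R, D i (r * s) = leib_coef D i r s
    & forall r, D (mzero e) r = r].

Definition trunc_HS_derivation (k : fieldType) (R : comAlgType k) (p e m : nat)
    (D : mindex e -> R -> R) : Prop :=
  HS_family (in_box (p ^ m)) D.

Definition HS_derivation (k : fieldType) (R : comAlgType k) (e : nat)
    (D : mindex e -> R -> R) : Prop :=
  HS_family predT D.

Definition finite_type_alg (k : fieldType) (R : comAlgType k) : Prop :=
  exists (n : nat) (g : 'I_n -> R),
    forall S : R -> Prop,
      S 1 ->
      (forall (a : k) x y, S x -> S y -> S (a *: x + y)) ->
      (forall x y, S x -> S y -> S (x * y)) ->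
      (forall t, S (g t)) ->
      forall r, S r.

Definition formally_smooth (k : fieldType) (R : comAlgType k) : Prop :=
  forall (A B : comAlgType k) (pi : {lrmorphism A -> B}),
    (forall b : B, exists a : A, pi a = b) ->
    (forall x y : A, pi x = 0 -> pi y = 0 -> x * y = 0) ->
    forall f : {lrmorphism R -> B},
      exists g : {lrmorphism R -> A}, forall r : R, pi (g r) = f r.

(* Smooth k-algebra. Over a field (Noetherian) finite type = finite presentation,
   so smooth = finite type + formally smooth. *)
Definition smooth_alg (k : fieldType) (R : comAlgType k) : Prop :=
  finite_type_alg R /\ formally_smooth R.

From HB Require Import structures.
From mathcomp Require Import all_boot all_order all_algebra.
From mathcomp Require Import boolp zify.
Set Implicit Arguments. Unset Strict Implicit. Unset Printing Implicit Defensive.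
Import GRing.Theory.
Local Open Scope ring_scope.

(* Let [layer n] be the set of multi-indices that lie in the box [[p^m]^e] or have
   total degree at most [n]. It is downward closed, so [R[[v]]] modulo the monomials
   outside [layer n] is a [k]-algebra [T_n], and the projection [T_(n+1) -> T_n] is
   surjective with square-zero kernel. An HS family indexed by [layer n] is the same
   as a [k]-algebra map [R -> T_n]; [D] gives one for [n = 0], formal smoothness lifts
   it successively to [T_1, T_2, ...], and [D'_i] is the coefficient of [v^i] in the
   lift to [T_(deg i)], which all later lifts share. *)

Section MultiIndexSums.
Variables (k : fieldType) (R : comAlgType k) (e : nat).
Implicit Types (i j l : mindex e) (F G : mindex e -> R).

Lemma mleP j i : reflect (forall t, (j t <= i t)%N) (mle j i).
Proof. exact: forallP. Qed.

Lemma mle_refl i : mle i i.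
Proof. by apply/mleP. Qed.

Lemma mle_trans i j l : mle l j -> mle j i -> mle l i.
Proof. by move=> /mleP h1 /mleP h2; apply/mleP => t; apply: leq_trans (h1 t) (h2 t). Qed.

Lemma msub_mle i j : mle (msub i j) i.
Proof. by apply/mleP => t; rewrite ffunE leq_subr. Qed.

Lemma msubK i j : mle j i -> msub i (msub i j) = j.
Proof. by move/mleP=> h; apply/ffunP => t; rewrite !ffunE subKn. Qed.

Lemma msub0 i : msub i (mzero e) = i.
Proof. by apply/ffunP => t; rewrite !ffunE subn0. Qed.

Definition madd j l : mindex e := [ffun t => (j t + l t)%N].
Definition mmax i := (\max_(t < e) i t)%N.

Lemma mle_mmax j i : mle j i -> forall t, (j t <= mmax i)%N.
Proof. by move/mleP=> h t; apply: leq_trans (h t) (leq_bigmax t). Qed.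

Definition to_box (B : nat) j : {ffun 'I_e -> 'I_B.+1} := [ffun t => inord (j t)].

Lemma to_boxK B j : (forall t, (j t <= B)%N) -> mval (to_box B j) = j.
Proof. by move=> hj; apply/ffunP => t; rewrite !ffunE /= inordK // ltnS. Qed.

Lemma mvalK B (j : {ffun 'I_e -> 'I_B.+1}) : to_box B (mval j) = j.
Proof. by apply/ffunP => t; rewrite !ffunE; apply: val_inj; rewrite /= inordK. Qed.

Definition sum_box (B : nat) (P : pred (mindex e)) F :=
  \sum_(j : {ffun 'I_e -> 'I_B.+1} | P (mval j)) F (mval j).

Lemma sum_box_reindex B B' (P P' : pred (mindex e)) F (phi psi : mindex e -> mindex e) :
    (forall j, P j -> forall t, (j t <= B)%N) ->
    (forall j, P' j -> forall t, (j t <= B')%N) ->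
    (forall j, P' j -> P (phi j)) -> (forall j, P j -> P' (psi j)) ->
    (forall j, P' j -> psi (phi j) = j) -> (forall j, P j -> phi (psi j) = j) ->
  sum_box B P F = sum_box B' P' (F \o phi).
Proof.
move=> hB hB' hP hP' phiK psiK; rewrite /sum_box.
rewrite (reindex_onto (fun j : {ffun 'I_e -> 'I_B'.+1} => to_box B (phi (mval j)))
                      (fun j : {ffun 'I_e -> 'I_B.+1} => to_box B' (psi (mval j)))) /=; last first.
  move=> j Pj; rewrite to_boxK; last by apply: hB'; apply: hP'.
  by rewrite psiK // mvalK.
have domE (j : {ffun 'I_e -> 'I_B'.+1}) :
    P (mval (to_box B (phi (mval j))))
    && (to_box B' (psi (mval (to_box B (phi (mval j))))) == j) = P' (mval j).
  apply/idP/idP => [/andP[Pj /eqP <-] | P'j].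
    by rewrite to_boxK; [apply: hP' | apply: hB'; apply: hP'].
  by rewrite to_boxK ?hP ?phiK ?mvalK ?eqxx //; apply: hB; apply: hP.
apply: eq_big => j; first exact: domE.
by rewrite domE => P'j; rewrite to_boxK //; apply: hB; apply: hP.
Qed.

Definition sum_mle i F := sum_box (mmax i) (fun x => mle x i) F.

Lemma eq_sum_mle i F G : (forall j, mle j i -> F j = G j) -> sum_mle i F = sum_mle i G.
Proof. by move=> h; apply: eq_bigr => j /h. Qed.

Lemma sum_mle_widen B i F :
  (forall t, (i t <= B)%N) -> sum_mle i F = sum_box B (fun x => mle x i) F.
Proof.
move=> hB; rewrite /sum_mle (@sum_box_reindex _ B _ (fun x => mle x i) F id id) //.
- by move=> j; apply: mle_mmax.
- by move=> j /mleP hj t; apply: leq_trans (hj t) (hB t).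
Qed.

Lemma sum_mle_shift B i l F : mle l i -> (forall t, (i t <= B)%N) ->
  sum_box B (fun j => mle j i && mle l j) F = sum_mle (msub i l) (F \o madd l).
Proof.
move=> /mleP hl hB.
apply: (@sum_box_reindex _ _ _ _ F (madd l) (fun j => msub j l)).
- by move=> j /andP[/mleP hj _] t; apply: leq_trans (hj t) (hB t).
- by move=> j; apply: mle_mmax.
- move=> j /mleP hj; apply/andP; split; apply/mleP => t;
    by have := hj t; have := hl t; rewrite !ffunE; lia.
- move=> j /andP[/mleP hj /mleP hlj]; apply/mleP => t.
  by have := hj t; have := hlj t; rewrite !ffunE; lia.
- by move=> j _; apply/ffunP => t; rewrite !ffunE addKn.
- by move=> j /andP[_ /mleP hlj]; apply/ffunP => t; rewrite !ffunE subnKC.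
Qed.

Definition conv F G i := sum_mle i (fun j => F j * G (msub i j)).

Lemma leib_coefE (D : mindex e -> R -> R) i r s :
  leib_coef D i r s = conv (D^~ r) (D^~ s) i.
Proof. by []. Qed.

Lemma convC F G i : conv F G i = conv G F i.
Proof.
rewrite /conv /sum_mle.
rewrite (@sum_box_reindex _ (mmax i) _ (fun x => mle x i) _ (msub i) (msub i)) //.
- by apply: eq_bigr => j hj /=; rewrite msubK // mulrC.
- by move=> j; apply: mle_mmax.
- by move=> j; apply: mle_mmax.
- by move=> j _; apply: msub_mle.
- by move=> j _; apply: msub_mle.
- by move=> j; apply: msubK.
- by move=> j; apply: msubK.
Qed.

Lemma conv1l F i : conv (fun j => (j == mzero e)%:R) F i = F i.
Proof.
have zeroK : mval (to_box (mmax i) (mzero e)) = mzero e by rewrite to_boxK // => t; rewrite ffunE.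
rewrite /conv /sum_mle /sum_box (bigD1 (to_box (mmax i) (mzero e))) /=; last first.
  by rewrite zeroK; apply/mleP => t; rewrite ffunE.
rewrite zeroK eqxx mul1r msub0 big1 ?addr0 // => j /andP[_ hj].
suff /negbTE -> : mval j != mzero e by rewrite mul0r.
by apply: contra hj => /eqP <-; rewrite mvalK.
Qed.

Lemma convDl F1 F2 G i : conv (fun j => F1 j + F2 j) G i = conv F1 G i + conv F2 G i.
Proof. by rewrite /conv /sum_mle /sum_box -big_split; apply: eq_bigr => j _; rewrite mulrDl. Qed.

Lemma convZl (a : k) F G i : conv (fun j => a *: F j) G i = a *: conv F G i.
Proof. by rewrite /conv /sum_mle /sum_box scaler_sumr; apply: eq_bigr => j _; rewrite scalerAl. Qed.

Lemma convA F G H i : conv (conv F G) H i = conv F (conv G H) i.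
Proof.
set M := mmax i; have hM : forall t, (i t <= M)%N := mle_mmax (mle_refl i).
have lhsE : conv (conv F G) H i = sum_box M (fun x => mle x i) (fun j =>
    sum_box M (fun x => mle x j) (fun l => F l * G (msub j l) * H (msub i j))).
  rewrite /conv (sum_mle_widen _ hM); apply: eq_bigr => j hj.
  by rewrite (sum_mle_widen _ (mle_mmax hj)) /sum_box mulr_suml.
have rhsE : conv F (conv G H) i = sum_box M (fun x => mle x i) (fun l =>
    sum_mle (msub i l) (fun j => F l * (G j * H (msub (msub i l) j)))).
  by rewrite /conv (sum_mle_widen _ hM); apply: eq_bigr => l _; rewrite /sum_mle /sum_box mulr_sumr.
rewrite lhsE rhsE /sum_box (exchange_big_dep (fun l : {ffun 'I_e -> 'I_M.+1} => mle (mval l) i)) /=;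
  last by move=> j l hj hl; apply: mle_trans hl hj.
apply: eq_bigr => l hl.
rewrite -[LHS]/(sum_box M (fun j => mle j i && mle (mval l) j)
  (fun j => F (mval l) * G (msub j (mval l)) * H (msub i j))) sum_mle_shift //.
apply: eq_sum_mle => j /mleP hj /=; rewrite -mulrA; congr (_ * (G _ * H _)).
  by apply/ffunP => t; rewrite !ffunE addKn.
by apply/ffunP => t; have := hj t; rewrite !ffunE; lia.
Qed.

End MultiIndexSums.

Section TruncatedSeries.
Variables (k : fieldType) (R : comAlgType k) (e : nat).
Implicit Types (i j : mindex e) (F G : mindex e -> R).

Record downset := Downset {
  dmem : pred (mindex e);
  dmem0 : dmem (mzero e);
  dmem_down : forall i j, mle j i -> dmem i -> dmem j }.

Variable S : downset.

(* [R[[v_1, ..., v_e]]] modulo the monomials [v^i] with [i] outside [S]; this is an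
   ideal because [S] is downward closed. *)
Record tseries := TSeries {
  tcoef : mindex e -> R;
  tcoef_out : forall i, ~~ dmem S i -> tcoef i = 0 }.

HB.instance Definition _ := gen_eqMixin tseries.
HB.instance Definition _ := gen_choiceMixin tseries.

Lemma tseries_ext (a b : tseries) : tcoef a =1 tcoef b -> a = b.
Proof.
case: a b => [fa ha] [fb hb] /= /funext eq_ab; subst fb.
by congr TSeries; apply: Prop_irrelevance.
Qed.

Lemma tmask_out (f : mindex e -> R) i : ~~ dmem S i -> (if dmem S i then f i else 0) = 0.
Proof. by move/negbTE => ->. Qed.

Definition tmask f := TSeries (tmask_out f).

Lemma tzero_out i : ~~ dmem S i -> (0 : R) = 0. Proof. by []. Qed.
Lemma tadd_out a b i : ~~ dmem S i -> tcoef a i + tcoef b i = 0.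
Proof. by move=> Si; rewrite !tcoef_out // addr0. Qed.
Lemma topp_out a i : ~~ dmem S i -> - tcoef a i = 0.
Proof. by move=> Si; rewrite tcoef_out // oppr0. Qed.
Lemma tscale_out (c : k) a i : ~~ dmem S i -> c *: tcoef a i = 0.
Proof. by move=> Si; rewrite tcoef_out // scaler0. Qed.
Lemma tone_out i : ~~ dmem S i -> ((i == mzero e)%:R : R) = 0.
Proof. by apply: contraNeq => /eqP; case: eqP => // ->; rewrite dmem0. Qed.

Definition tzero := TSeries tzero_out.
Definition tadd a b := TSeries (tadd_out a b).
Definition topp a := TSeries (topp_out a).
Definition tscale c a := TSeries (tscale_out c a).
Definition tone := TSeries tone_out.
Definition tmul a b := tmask (conv (tcoef a) (tcoef b)).

Lemma taddA : associative tadd.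
Proof. by move=> a b c; apply: tseries_ext => i /=; rewrite addrA. Qed.
Lemma taddC : commutative tadd.
Proof. by move=> a b; apply: tseries_ext => i /=; rewrite addrC. Qed.
Lemma tadd0 : left_id tzero tadd.
Proof. by move=> a; apply: tseries_ext => i /=; rewrite add0r. Qed.
Lemma taddN : left_inverse tzero topp tadd.
Proof. by move=> a; apply: tseries_ext => i /=; rewrite addNr. Qed.

HB.instance Definition _ := GRing.isZmodule.Build tseries taddA taddC tadd0 taddN.

Lemma conv_maskl i F G : dmem S i ->
  conv (fun j => if dmem S j then F j else 0) G i = conv F G i.
Proof. by move=> Si; apply: eq_sum_mle => j hj; rewrite (dmem_down hj Si). Qed.

Lemma conv_maskr i F G : dmem S i ->
  conv F (fun j => if dmem S j then G j else 0) i = conv F G i.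
Proof. by move=> Si; apply: eq_sum_mle => j hj; rewrite (dmem_down (msub_mle i j) Si). Qed.

Lemma tmulA : associative tmul.
Proof.
move=> a b c; apply: tseries_ext => i /=; case: ifP => // Si.
by rewrite conv_maskl // conv_maskr // convA.
Qed.
Lemma tmulC : commutative tmul.
Proof. by move=> a b; apply: tseries_ext => i /=; rewrite convC. Qed.
Lemma tmul1 : left_id tone tmul.
Proof. by move=> a; apply: tseries_ext => i /=; rewrite conv1l; case: ifP => // /negbT /tcoef_out. Qed.
Lemma tmulDl : left_distributive tmul tadd.
Proof.
move=> a b c; apply: tseries_ext => i /=; case: ifP => _; last by rewrite addr0.
by rewrite convDl.
Qed.
Lemma tone_neq0 : tone != tzero.
Proof.
apply/eqP => /(congr1 (fun x => tcoef x (mzero e))) /=.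
by rewrite eqxx; apply/eqP; rewrite oner_neq0.
Qed.

HB.instance Definition _ := GRing.Zmodule_isComNzRing.Build tseries
  tmulA tmulC tmul1 tmulDl tone_neq0.

Lemma tscaleA c1 c2 a : tscale c1 (tscale c2 a) = tscale (c1 * c2) a.
Proof. by apply: tseries_ext => i /=; rewrite scalerA. Qed.
Lemma tscale1 : left_id 1 tscale.
Proof. by move=> a; apply: tseries_ext => i /=; rewrite scale1r. Qed.
Lemma tscaleDr : right_distributive tscale +%R.
Proof. by move=> c a b; apply: tseries_ext => i /=; rewrite scalerDr. Qed.
Lemma tscaleDl a : {morph tscale^~ a : c1 c2 / c1 + c2}.
Proof. by move=> c1 c2; apply: tseries_ext => i /=; rewrite scalerDl. Qed.

HB.instance Definition _ := GRing.Zmodule_isLmodule.Build k tseries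
  tscaleA tscale1 tscaleDr tscaleDl.

Lemma tscaleAl (c : k) (a b : tseries) : c *: (a * b) = (c *: a) * b.
Proof.
apply: tseries_ext => i /=; case: ifP => _; last by rewrite scaler0.
by rewrite convZl.
Qed.

HB.instance Definition _ := GRing.Lmodule_isLalgebra.Build k tseries tscaleAl.
HB.instance Definition _ := GRing.Lalgebra_isComAlgebra.Build k tseries.

Lemma tcoefM (a b : tseries) i : tcoef (a * b) i = if dmem S i then conv (tcoef a) (tcoef b) i else 0.
Proof. by []. Qed.

End TruncatedSeries.

Section Projection.
Variables (k : fieldType) (R : comAlgType k) (e : nat) (S T : downset e).
Hypothesis sub_ST : forall i, dmem S i -> dmem T i.

Definition tproj (a : tseries R T) : tseries R S := tmask S (tcoef a).

Lemma tproj_zmod : zmod_morphism tproj.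
Proof. by move=> a b; apply: tseries_ext => i /=; case: ifP; rewrite ?subrr. Qed.

Lemma tproj_scale : scalable tproj.
Proof. by move=> c a; apply: tseries_ext => i /=; case: ifP; rewrite ?scaler0. Qed.

Lemma tproj_monoid : monoid_morphism tproj.
Proof.
split=> [|a b]; apply: tseries_ext => i /=; case: ifP => // Si.
  by move: Si; case: eqP => // ->; rewrite dmem0.
by rewrite sub_ST // conv_maskl // conv_maskr.
Qed.

HB.instance Definition _ := GRing.isZmodMorphism.Build _ _ tproj tproj_zmod.
HB.instance Definition _ := GRing.isMonoidMorphism.Build _ _ tproj tproj_monoid.
HB.instance Definition _ := GRing.isScalable.Build k _ _ *:%R tproj tproj_scale.

Definition tproj_lrmorphism : {lrmorphism tseries R T -> tseries R S} :=
  GRing.LRMorphism.clone _ _ _ _ tproj _.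

Lemma tproj_surj (b : tseries R S) : exists a, tproj a = b.
Proof.
have out_T i : ~~ dmem T i -> tcoef b i = 0.
  by move=> Ti; apply: tcoef_out; apply: contra Ti; apply: sub_ST.
exists (TSeries out_T); apply: tseries_ext => i /=.
by case: ifP => // /negbT /tcoef_out ->.
Qed.

Hypothesis split_ST : forall i j, dmem T i -> mle j i -> dmem S j || dmem S (msub i j).

Lemma tproj_kerM (a b : tseries R T) : tproj a = 0 -> tproj b = 0 -> a * b = 0.
Proof.
have coef0 c i : tproj c = 0 -> dmem S i -> tcoef c i = 0.
  by move=> /(congr1 (fun x => tcoef x i)) /= + Si; rewrite Si.
move=> a0 b0; apply: tseries_ext => i /=; case: ifP => // Ti.
rewrite /conv /sum_mle /sum_box big1 // => j hj.
by case/orP: (split_ST Ti hj) => [/(coef0 _ _ a0) -> | /(coef0 _ _ b0) ->];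
  rewrite ?mul0r ?mulr0.
Qed.

End Projection.

Lemma HS_family_sub (k : fieldType) (R : comAlgType k) (e : nat)
    (P Q : pred (mindex e)) (D : mindex e -> R -> R) :
  {subset Q <= P} -> HS_family P D -> HS_family Q D.
Proof. by move=> QP [hlin h1 hmul h0]; split=> // i /QP; [apply: hlin | apply: h1 | apply: hmul]. Qed.

Section HSSeries.
Variables (k : fieldType) (R : comAlgType k) (e : nat) (S : downset e).
Variables (D : mindex e -> R -> R) (hD : HS_family (dmem S) D).

Definition hs_series r : tseries R S := tmask S (D^~ r).

Lemma hs_coef0 i : dmem S i -> D i 0 = 0.
Proof.
case: hD => hlin _ _ _ Si; have := hlin i Si 1 0 0.
by rewrite !scale1r addr0 => D0; apply: (@addrI _ (D i 0)); rewrite addr0 -D0.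
Qed.

Lemma hs_series_zmod : zmod_morphism hs_series.
Proof.
case: hD => hlin _ _ _ a b; apply: tseries_ext => i /=; case: ifP => Si; last by rewrite subrr.
by rewrite addrC -scaleN1r hlin // scaleN1r addrC.
Qed.

Lemma hs_series_scale : scalable hs_series.
Proof.
case: hD => hlin _ _ _ c a; apply: tseries_ext => i /=; case: ifP => Si; last by rewrite scaler0.
by rewrite -[c *: a]addr0 hlin // hs_coef0 // addr0.
Qed.

Lemma hs_series_monoid : monoid_morphism hs_series.
Proof.
case: hD => _ h1 hmul _; split=> [|a b]; apply: tseries_ext => i /=; case: ifP => Si.
- exact: h1.
- by move: Si; case: eqP => // ->; rewrite dmem0.
- by rewrite conv_maskl // conv_maskr // hmul.
- by [].
Qed.

HB.instance Definition _ := GRing.isZmodMorphism.Build _ _ hs_series hs_series_zmod.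
HB.instance Definition _ := GRing.isMonoidMorphism.Build _ _ hs_series hs_series_monoid.
HB.instance Definition _ := GRing.isScalable.Build k _ _ *:%R hs_series hs_series_scale.

Definition hs_lrmorphism : {lrmorphism R -> tseries R S} :=
  GRing.LRMorphism.clone _ _ _ _ hs_series _.

Lemma hs_lrmorphismE r i : dmem S i -> tcoef (hs_lrmorphism r) i = D i r.
Proof. by move=> /= ->. Qed.

End HSSeries.

Section Layers.
Variables (e N : nat).
Implicit Types i j : mindex e.

Definition mdeg i := (\sum_(t < e) i t)%N.

Lemma mdeg_msub i j : mle j i -> mdeg i = (mdeg j + mdeg (msub i j))%N.
Proof.
move/mleP => hji; rewrite /mdeg -big_split; apply: eq_bigr => t _.
by rewrite ffunE /= subnKC.
Qed.

Lemma mdeg0 : mdeg (mzero e) = 0%N.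
Proof. by rewrite /mdeg big1 // => t _; rewrite ffunE. Qed.

Lemma leq_mdeg i t : (i t <= mdeg i)%N.
Proof. by rewrite /mdeg (bigD1 t) //= leq_addr. Qed.

Lemma mdeg_mle j i : mle j i -> (mdeg j <= mdeg i)%N.
Proof. by move=> hji; rewrite (mdeg_msub hji) leq_addr. Qed.

Definition layer_mem n : pred (mindex e) := fun i => in_box N i || (mdeg i <= n)%N.

Lemma layer_mem0 n : layer_mem n (mzero e).
Proof. by apply/orP; right; rewrite mdeg0. Qed.

Lemma layer_mem_down n i j : mle j i -> layer_mem n i -> layer_mem n j.
Proof.
move=> hji /orP[/forallP box_i | deg_i]; apply/orP.
  by left; apply/forallP => t; apply: leq_ltn_trans (mleP _ _ hji t) (box_i t).
by right; apply: leq_trans (mdeg_mle hji) deg_i.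
Qed.

Definition layer n := Downset (layer_mem0 n) (@layer_mem_down n).

Lemma layer_mono n n' i : (n <= n')%N -> dmem (layer n) i -> dmem (layer n') i.
Proof. by move=> le_nn' /orP[box_i | deg_i]; apply/orP; [left | right; apply: leq_trans le_nn']. Qed.

Lemma in_box_layer n i : in_box N i -> dmem (layer n) i.
Proof. by move=> box_i; apply/orP; left. Qed.

Lemma layer0_in_box : (0 < N)%N -> {subset dmem (layer 0) <= in_box N}.
Proof.
move=> N_gt0 i /orP[// | deg0]; apply/forallP => t.
by apply: leq_ltn_trans N_gt0; apply: leq_trans deg0; apply: leq_mdeg.
Qed.

Lemma layer_mdeg i : dmem (layer (mdeg i)) i.
Proof. by apply/orP; right. Qed.

Lemma layer_split n i j :
  dmem (layer n.+1) i -> mle j i -> dmem (layer n) j || dmem (layer n) (msub i j).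
Proof.
move=> /orP[box_i | deg_i] hji.
  by apply/orP; left; apply: (layer_mem_down hji); rewrite /layer_mem box_i.
have deg_sum := mdeg_msub hji; rewrite /= /layer_mem.
by case: (leqP (mdeg j) n) => deg_j; rewrite ?deg_j ?orbT //; apply/orP; right; apply/orP; right; lia.
Qed.

End Layers.

Section Tower.
Variables (k : fieldType) (R : comAlgType k) (e N : nat).
Hypothesis smoothR : formally_smooth R.
Variable f0 : {lrmorphism R -> tseries R (layer e N 0)}.

Lemma layer_lift n (f : {lrmorphism R -> tseries R (layer e N n)}) :
  exists g : {lrmorphism R -> tseries R (layer e N n.+1)},
    forall r, tproj_lrmorphism R (fun i => @layer_mono e N n n.+1 i (leqnSn n)) (g r) = f r.
Proof.
pose sub i := @layer_mono e N n n.+1 i (leqnSn n).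
exact: (@smoothR _ _ (tproj_lrmorphism R sub) (tproj_surj sub) (tproj_kerM (@layer_split e N n)) f).
Qed.

Fixpoint tower n : {lrmorphism R -> tseries R (layer e N n)} :=
  if n is n'.+1 then proj1_sig (cid (layer_lift (tower n'))) else f0.

Lemma tower_succ n r i : dmem (layer e N n) i -> tcoef (tower n.+1 r) i = tcoef (tower n r) i.
Proof.
move=> in_n; have := congr1 (fun x => tcoef x i) (proj2_sig (cid (layer_lift (tower n))) r).
by move: in_n => /= ->.
Qed.

Lemma tower_stable n n' r i : (n <= n')%N -> dmem (layer e N n) i ->
  tcoef (tower n' r) i = tcoef (tower n r) i.
Proof.
move=> /subnKC <- in_n; elim: (n' - n)%N => [|d IHd]; first by rewrite addn0.
by rewrite addnS tower_succ // (layer_mono _ in_n) // leq_addr.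
Qed.

Definition tower_limit i r := tcoef (tower (mdeg i) r) i.

Lemma tower_limitE n i r : (mdeg i <= n)%N -> tower_limit i r = tcoef (tower n r) i.
Proof. by move=> le_deg; rewrite /tower_limit (tower_stable r le_deg (layer_mdeg N i)). Qed.

Lemma tower_limit_HS : (forall r, tcoef (f0 r) (mzero e) = r) -> HS_derivation tower_limit.
Proof.
move=> f0_id; split=> [i _ a r s | i _ | i _ r s | r].
- by rewrite /tower_limit linearP.
- by rewrite /tower_limit rmorph1.
- rewrite leib_coefE {1}/tower_limit rmorphM tcoefM layer_mdeg.
  apply: eq_sum_mle => j hj; congr (_ * _); symmetry; apply: tower_limitE.
    exact: mdeg_mle.
  exact/mdeg_mle/msub_mle.
- by rewrite (@tower_limitE 0) ?mdeg0.
Qed.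

Lemma tower_limit_layer0 i : dmem (layer e N 0) i -> tower_limit i =1 fun r => tcoef (f0 r) i.
Proof. by move=> in_0 r; rewrite /tower_limit (tower_stable r (leq0n _) in_0). Qed.

End Tower.

Theorem theorem2p3 (k : fieldType) (p : nat) (hp : p \in [pchar k])
    (R : comAlgType k) (hR : smooth_alg R) (e m : nat) (he : (0 < e)%N) (hm : (0 < m)%N)
    (D : mindex e -> R -> R) (hD : trunc_HS_derivation p m D) :
  exists D' : mindex e -> R -> R,
    HS_derivation D' /\ (forall i : mindex e, in_box (p ^ m) i -> D' i = D i).
Proof.
have box_gt0 : (0 < p ^ m)%N by rewrite expn_gt0 prime_gt0 // (pcharf_prime hp).
have hD0 := HS_family_sub (@layer0_in_box e _ box_gt0) hD.
have [_ _ _ D0_id] := hD0.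
exists (tower_limit hR.2 (hs_lrmorphism hD0)); split.
  by apply: tower_limit_HS => r; rewrite hs_lrmorphismE ?D0_id ?dmem0.
move=> i box_i; apply/funext => r.
by rewrite tower_limit_layer0 ?hs_lrmorphismE ?in_box_layer.
Qed.
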